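(* Let $\mathcal H$ be a complex Hilbert space, let $\mathbf A=(A_1,\dots,A_m)$ be an $m$-tuple of bounded self-adjoint operators on $\mathcal H$, and let $k$ be a positive integer. If $\Lambda_{\hat k}(\mathbf A)\neq\emptyset$ for some integer $\hat k\ge (m+2)k$, then $\Lambda_k(\mathbf A)$ is star-shaped and contains the convex set $\operatorname{conv}\Lambda_{\hat k}(\mathbf A)$, and every element of $\operatorname{conv}\Lambda_{\hat k}(\mathbf A)$ is a star center of $\Lambda_k(\mathbf A)$.
   Context: For an $m$-tuple $\mathbf A=(A_1,\dots,A_m)$ of bounded self-adjoint operators on a complex Hilbert space $\mathcal H$ and a positive integer $k$, the joint rank-$k$ numerical range is $\Lambda_k(\mathbf A)=\{(a_1,\dots,a_m)\in\mathbb R^m:$ there is an orthogonal projection $P$ of rank $k$ on $\mathcal H$ with $PA_jP=a_jP$ for $j=1,\dots,m\}$. A set $S\subseteq\mathbb R^m$ is star-shaped with star center $\mathbf c\in S$ if for every $\mathbf b\in S$ the line segment joining $\mathbf c$ and $\mathbf b$ lies in $S$. $\operatorname{conv}$ denotes convex hull. *)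

From HB Require Import structures.
From mathcomp Require Import all_boot all_order all_algebra.
From mathcomp Require Import complex.
From mathcomp Require Import reals.
Set Implicit Arguments. Unset Strict Implicit. Unset Printing Implicit Defensive.
Import Order.TTheory GRing.Theory Num.Theory.
Local Open Scope ring_scope.

Section HilbertDefs.
Variable R : realType.
Variable H : lmodType R[i].
Variable ip : H -> H -> R[i].

Definition is_inner_product : Prop :=
  [/\ (forall (a : R[i]) (x y z : H), ip (a *: x + y) z = a * ip x z + ip y z),
      (forall x y : H, ip x y = conjc (ip y x)),
      (forall x : H, 0 <= ip x x) &
      (forall x : H, ip x x = 0 -> x = 0)].

Definition hnorm (x : H) : R := Num.sqrt (complex.Re (ip x x)).

Definition norm_complete : Prop :=
  forall u : nat -> H,
    (forall e : R, 0 < e -> exists N : nat, forall p q : nat,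
        (N <= p)%N -> (N <= q)%N -> hnorm (u p - u q) < e) ->
    exists x : H, forall e : R, 0 < e -> exists N : nat, forall n : nat,
        (N <= n)%N -> hnorm (u n - x) < e.

Definition is_hilbert : Prop := is_inner_product /\ norm_complete.

Definition linear_op (T : H -> H) : Prop :=
  forall (a : R[i]) (x y : H), T (a *: x + y) = a *: T x + T y.

Definition bounded_op (T : H -> H) : Prop :=
  linear_op T /\ exists M : R, forall x : H, hnorm (T x) <= M * hnorm x.

Definition self_adjoint (T : H -> H) : Prop :=
  forall x y : H, ip (T x) y = ip x (T y).

Definition orth_proj (P : H -> H) : Prop :=
  [/\ linear_op P, (forall x, P (P x) = P x) & self_adjoint P].

Definition has_rank (P : H -> H) (k : nat) : Prop :=
  exists v : 'I_k -> H,
    [/\ (forall i, exists y, P y = v i),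
        (forall c : 'I_k -> R[i], \sum_(i < k) c i *: v i = 0 -> forall i, c i = 0) &
        (forall x, exists c : 'I_k -> R[i], P x = \sum_(i < k) c i *: v i)].

Definition joint_rank_nr (m : nat) (A : 'I_m -> H -> H) (k : nat)
    (a : 'rV[R]_m) : Prop :=
  exists P : H -> H, [/\ orth_proj P, has_rank P k &
    forall (j : 'I_m) (x : H), P (A j (P x)) = ((a ord0 j)%:C)%C *: P x].

End HilbertDefs.

Section Geometry.
Variable R : realType.
Variable m : nat.

Definition conv_hull (S : 'rV[R]_m -> Prop) (a : 'rV[R]_m) : Prop :=
  exists (n : nat) (w : 'I_n -> R) (x : 'I_n -> 'rV[R]_m),
    [/\ (forall i, 0 <= w i), \sum_(i < n) w i = 1, (forall i, S (x i)) &
        a = \sum_(i < n) w i *: x i].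

Definition star_center (S : 'rV[R]_m -> Prop) (c : 'rV[R]_m) : Prop :=
  S c /\ forall b, S b -> forall t : R, 0 <= t <= 1 -> S ((1 - t) *: c + t *: b).

Definition star_shaped (S : 'rV[R]_m -> Prop) : Prop :=
  exists c, star_center S c.
End Geometry.

(* A point a lies in Lambda_p(A) iff
   some orthonormal family g_1, ..., g_p satisfies <A_j g_i, g_l> = a_j d_il.
   Let e witness b in Lambda_k.  The range of a rank-khat projection
   witnessing a in Lambda_khat contains k orthonormal vectors f_i orthogonal
   to the k(m+1) vectors e_i, A_j e_i, because khat >= (m+2)k; then
   g_i = sqrt(1-t) f_i + sqrt(t) e_i witnesses (1-t)a + tb in Lambda_k, all
   cross terms vanishing.  Induction on the number of points extends this from
   segments to convex combinations. *)
From HB Require Import structures.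
From mathcomp Require Import all_boot all_order all_algebra.
From mathcomp Require Import complex.
From mathcomp Require Import reals.
From mathcomp Require Import ring zify.
Set Implicit Arguments. Unset Strict Implicit.
Import Order.TTheory GRing.Theory Num.Theory.
Local Open Scope ring_scope.

Lemma sum_mul_delta (T : pzRingType) n (F : 'I_n -> T) l :
  \sum_(i < n) F i * (i == l)%:R = F l.
Proof.
rewrite (bigD1 l) //= eqxx mulr1 big1 ?addr0 // => i /negbTE ->.
by rewrite mulr0.
Qed.

Lemma conv_hull_self (R : realType) m (S : 'rV[R]_m -> Prop) a :
  S a -> conv_hull S a.
Proof.
move=> Sa; exists 1%N, (fun _ => 1), (fun _ => a).
by split=> //; rewrite big_ord1 ?scale1r.
Qed.

Section InnerProduct.
Variable R : realType.
Variable H : lmodType R[i].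
Variable ip : H -> H -> R[i].
Hypothesis hip : is_inner_product ip.

Lemma ipZDl a x y z : ip (a *: x + y) z = a * ip x z + ip y z.
Proof. by case: hip. Qed.

Lemma ipC x y : ip x y = conjc (ip y x).
Proof. by case: hip. Qed.

Lemma ip_ge0 x : 0 <= ip x x.
Proof. by case: hip. Qed.

Lemma ip_eq0 x : ip x x = 0 -> x = 0.
Proof. by case: hip => _ _ _; apply. Qed.

Lemma ip0l z : ip 0 z = 0.
Proof. by have := ipZDl (-1) z z z; rewrite scaleN1r addNr mulN1r addNr. Qed.

Lemma ipDl x y z : ip (x + y) z = ip x z + ip y z.
Proof. by have := ipZDl 1 x y z; rewrite scale1r mul1r. Qed.

Lemma ipZl a x z : ip (a *: x) z = a * ip x z.
Proof. by have := ipZDl a x 0 z; rewrite addr0 ip0l addr0. Qed.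

Lemma ip_suml n (f : 'I_n -> H) z :
  ip (\sum_(i < n) f i) z = \sum_(i < n) ip (f i) z.
Proof. exact: (big_morph (ip^~ z) (fun x y => ipDl x y z) (ip0l z)). Qed.

Lemma ip0r z : ip z 0 = 0.
Proof. by rewrite ipC ip0l conjc0. Qed.

Lemma ipDr x y z : ip z (x + y) = ip z x + ip z y.
Proof. by rewrite (ipC z) (ipC z x) (ipC z y) ipDl rmorphD. Qed.

Lemma ipZr a x z : ip z (a *: x) = conjc a * ip z x.
Proof. by rewrite (ipC z) (ipC z x) ipZl rmorphM. Qed.

Lemma ip_sumr n (f : 'I_n -> H) z :
  ip z (\sum_(i < n) f i) = \sum_(i < n) ip z (f i).
Proof. exact: (big_morph (ip z) (fun x y => ipDr x y z) (ip0r z)). Qed.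

Lemma ip_real x : (complex.Re (ip x x))%:C%C = ip x x.
Proof. exact/RRe_real/ger0_real/ip_ge0. Qed.

Definition orthonormal n (g : 'I_n -> H) : Prop :=
  forall i l, ip (g i) (g l) = (i == l)%:R.

Section Span.
Variables (p : nat) (v : 'I_p -> H).
Hypothesis v_free :
  forall c : 'I_p -> R[i], \sum_(i < p) c i *: v i = 0 -> forall i, c i = 0.

Definition in_span (x : H) : Prop :=
  exists c : 'I_p -> R[i], x = \sum_(i < p) c i *: v i.

Lemma exists_unit_orthogonal_in_span (U : finType) (u : U -> H) :
  (#|U| < p)%N ->
  exists2 f, in_span f & ip f f = 1 /\ forall r, ip f (u r) = 0.
Proof.
move=> ltUp.
pose M := \matrix_(i < p, r < #|U|) ip (v i) (u (enum_val r)).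
have kerM_neq0 : kermx M != 0.
  rewrite kermx_eq0 /row_free; apply/negP => /eqP rankM.
  by move: (rank_leq_col M); rewrite rankM leqNgt ltUp.
have /existsP [i0 rowi0] : [exists i0, row i0 (kermx M) != 0].
  apply: contraR kerM_neq0 => /existsPn rows0; apply/eqP/row_matrixP => i.
  by rewrite row0; apply/eqP; move: (rows0 i); rewrite negbK.
pose c i := kermx M i0 i.
pose f0 := \sum_(i < p) c i *: v i.
have f0_orth r : ip f0 (u r) = 0.
  have <- : (kermx M *m M) i0 (enum_rank r) = 0 by rewrite mulmx_ker mxE.
  rewrite mxE /f0 ip_suml; apply: eq_bigr => i _.
  by rewrite ipZl [X in _ = _ * X]mxE enum_rankK.
have f0_neq0 : f0 != 0.
  apply: contra rowi0 => /eqP f0_0; apply/eqP/rowP => j.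
  by rewrite [LHS]mxE [RHS]mxE; apply: (v_free f0_0).
pose n := complex.Re (ip f0 f0).
have n_gt0 : 0 < n.
  rewrite lt_def -ler0c ip_real ip_ge0 andbT.
  apply: contra f0_neq0 => /eqP n0; apply/eqP/ip_eq0.
  by rewrite -ip_real -/n n0.
pose s : R[i] := (Num.sqrt n)^-1%:C%C.
exists (s *: f0); last split.
- exists (fun i => s * c i).
  by rewrite /f0 scaler_sumr; apply: eq_bigr => i _; rewrite scalerA.
- rewrite ipZl ipZr -ip_real -/n /s conjc_real -!rmorphM /=.
  by rewrite mulrA -expr2 exprVn sqr_sqrtr ?ltW // mulVf // lt0r_neq0.
- by move=> r; rewrite ipZl f0_orth mulr0.
Qed.

Lemma exists_orthonormal_orthogonal_in_span (U : finType) (u : U -> H) n :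
  (#|U| + n <= p)%N ->
  exists g : 'I_n -> H, [/\ forall i, in_span (g i), orthonormal g &
    forall i r, ip (g i) (u r) = 0].
Proof.
elim: n => [|n IH] len; first by exists (fun _ => 0); split => -[].
have [|g [g_span g_on g_orth]] := IH; first by rewrite (leq_trans _ len) ?leq_add2l.
pose u' (s : U + 'I_n) := match s with inl r => u r | inr i => g i end.
have [|f f_span [f_unit f_orth]] := exists_unit_orthogonal_in_span u'.
  by rewrite card_sum card_ord (leq_trans _ len) // addnS.
have f_g j : ip f (g j) = 0 by apply: (f_orth (inr j)).
have g_f j : ip (g j) f = 0 by rewrite ipC f_g conjc0.
pose g' (i : 'I_n.+1) := oapp g f (unlift ord_max i).
have g'_lift j : g' (lift ord_max j) = g j by rewrite /g' liftK.
have g'_max : g' ord_max = f by rewrite /g' unlift_none.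
exists g'; split.
- by move=> i; case: (unliftP ord_max i) => [j|] ->; rewrite ?g'_lift ?g'_max.
- move=> i l; case: (unliftP ord_max i) => [j|] ->;
    case: (unliftP ord_max l) => [j'|] ->;
    rewrite ?g'_lift ?g'_max ?g_on ?f_unit ?f_g ?g_f ?(inj_eq lift_inj) ?eqxx //.
  + by rewrite eq_sym (negbTE (neq_lift _ _)).
  + by rewrite (negbTE (neq_lift _ _)).
- move=> i r; case: (unliftP ord_max i) => [j|] ->; rewrite ?g'_lift ?g'_max //.
  exact: (f_orth (inl r)).
Qed.

End Span.
End InnerProduct.

Section LinearOp.
Variable R : realType.
Variable H : lmodType R[i].
Variable T : H -> H.
Hypothesis T_lin : linear_op T.

Lemma linear_op0 : T 0 = 0.
Proof. by have := T_lin (-1) 0 0; rewrite addr0 !scaleN1r oppr0 addNr. Qed.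

Lemma linear_opZ a x : T (a *: x) = a *: T x.
Proof. by have := T_lin a x 0; rewrite linear_op0 !addr0. Qed.

Lemma linear_op_sum n (c : 'I_n -> R[i]) (x : 'I_n -> H) :
  T (\sum_(i < n) c i *: x i) = \sum_(i < n) c i *: T (x i).
Proof.
elim: n c x => [|n IH] c x; first by rewrite !big_ord0 linear_op0.
by rewrite !big_ord_recr /= addrC T_lin IH addrC.
Qed.

End LinearOp.

Section JointRankRange.
Variable R : realType.
Variable H : lmodType R[i].
Variable ip : H -> H -> R[i].
Hypothesis hip : is_inner_product ip.
Variable m : nat.
Variable A : 'I_m -> H -> H.
Hypothesis A_lin : forall j, linear_op (A j).
Hypothesis A_sa : forall j, self_adjoint ip (A j).

Definition compresses_to (a : 'rV[R]_m) n (g : 'I_n -> H) : Prop :=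
  forall j i l, ip (A j (g i)) (g l) = (a ord0 j)%:C%C * (i == l)%:R.

Lemma joint_rank_nr_orthonormal p a (U : finType) (u : U -> H) n :
  joint_rank_nr ip A p a -> (#|U| + n <= p)%N ->
  exists g : 'I_n -> H, [/\ orthonormal ip g, compresses_to a g &
    forall i r, ip (g i) (u r) = 0].
Proof.
move=> [P [[P_lin P_idem P_sa] [v [v_range v_free v_span]] PAP]] len.
have [g [g_span g_on g_orth]] :=
  exists_orthonormal_orthogonal_in_span hip v_free u len.
have Pv i : P (v i) = v i by have [y <-] := v_range i; rewrite P_idem.
have Pg i : P (g i) = g i.
  have [c ->] := g_span i.
  by rewrite linear_op_sum //; apply: eq_bigr => l _; rewrite Pv.
exists g; split => // j i l.
by rewrite -{1}(Pg i) -(Pg l) -P_sa PAP (ipZl hip) Pg g_on.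
Qed.

Lemma orthonormal_joint_rank_nr k a (g : 'I_k -> H) :
  orthonormal ip g -> compresses_to a g -> joint_rank_nr ip A k a.
Proof.
move=> g_on gAg.
pose P x := \sum_(i < k) ip x (g i) *: g i.
have P_lin : linear_op P.
  move=> c x y; rewrite /P scaler_sumr -big_split /=; apply: eq_bigr => i _.
  by rewrite (ipZDl hip) scalerDl scalerA.
have ipP x l : ip (P x) (g l) = ip x (g l).
  rewrite (ip_suml hip) -(sum_mul_delta (fun i => ip x (g i)) l).
  by apply: eq_bigr => i _; rewrite (ipZl hip) g_on.
exists P; split.
- split => // [x|x y].
    by rewrite {1}/P; apply: eq_bigr => l _; rewrite ipP.
  rewrite /P (ip_suml hip) (ip_sumr hip); apply: eq_bigr => i _.
  by rewrite (ipZl hip) (ipZr hip) -(ipC hip) mulrC.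
- exists g; split => [i|c c0 i|x]; last by exists (fun i => ip x (g i)).
    exists (g i); rewrite /P (bigD1 i) //= g_on eqxx scale1r big1 ?addr0 //.
    by move=> l /negbTE l_i; rewrite g_on eq_sym l_i scale0r.
  have := congr1 (ip^~ (g i)) c0; rewrite /= (ip_suml hip) (ip0l hip) => <-.
  by rewrite -(sum_mul_delta c i); apply: eq_bigr => l _; rewrite (ipZl hip) g_on.
- move=> j x; rewrite {1}/P /P scaler_sumr; apply: eq_bigr => l _.
  rewrite scalerA linear_op_sum // (ip_suml hip); congr (_ *: _).
  under eq_bigr => i _ do rewrite (ipZl hip) gAg mulrA.
  by rewrite (sum_mul_delta (fun i => ip x (g i) * _) l) mulrC.
Qed.

Lemma joint_rank_nr_le k p a :
  (k <= p)%N -> joint_rank_nr ip A p a -> joint_rank_nr ip A k a.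
Proof.
move=> le_kp Aa.
have [|g [g_on gAg _]] :=
  joint_rank_nr_orthonormal (n := k) (fun x : void => match x with end) Aa.
  by rewrite card_void.
exact: orthonormal_joint_rank_nr g_on gAg.
Qed.

Lemma joint_rank_nr_segment k khat a b t :
  ((m + 2) * k <= khat)%N -> 0 <= t <= 1 ->
  joint_rank_nr ip A khat a -> joint_rank_nr ip A k b ->
  joint_rank_nr ip A k ((1 - t) *: a + t *: b).
Proof.
move=> len /andP [t_ge0 t_le1] Aa Ab.
have [|e [e_on eAe _]] :=
  joint_rank_nr_orthonormal (n := k) (fun x : void => match x with end) Ab.
  by rewrite card_void.
pose u (s : 'I_k * option 'I_m) := oapp (A ^~ (e s.1)) (e s.1) s.2.
have [|f [f_on fAf f_orth]] := joint_rank_nr_orthonormal (n := k) u Aa.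
  by rewrite card_prod card_option !card_ord (leq_trans _ len) //; lia.
have f_e i l : ip (f i) (e l) = 0 by apply: (f_orth i (l, None)).
have e_f i l : ip (e i) (f l) = 0 by rewrite (ipC hip) f_e conjc0.
have Af_e j i l : ip (A j (f i)) (e l) = 0.
  by rewrite A_sa; apply: (f_orth i (l, Some j)).
have Ae_f j i l : ip (A j (e i)) (f l) = 0.
  by rewrite (ipC hip) (f_orth l (i, Some j)) conjc0.
pose sa : R[i] := (Num.sqrt (1 - t))%:C%C.
pose sb : R[i] := (Num.sqrt t)%:C%C.
have sa2 : sa * sa = (1 - t)%:C%C.
  by rewrite -rmorphM -expr2 sqr_sqrtr // subr_ge0.
have sb2 : sb * sb = t%:C%C by rewrite -rmorphM -expr2 sqr_sqrtr.
apply: (@orthonormal_joint_rank_nr _ _ (fun i => sa *: f i + sb *: e i)).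
- move=> i l; rewrite !(ipDl hip) !(ipDr hip) !(ipZl hip) !(ipZr hip).
  rewrite !conjc_real f_on e_on f_e e_f !mulr0 addr0 add0r !mulrA sa2 sb2.
  by rewrite -mulrDl -rmorphD /= subrK mul1r.
- move=> j i l; rewrite A_lin linear_opZ //.
  rewrite !(ipDl hip) !(ipDr hip) !(ipZl hip) !(ipZr hip) !conjc_real.
  rewrite fAf eAe Af_e Ae_f !mulr0 addr0 add0r !mulrA sa2 sb2 !mxE.
  rewrite [X in _ = X * _]rmorphD [X in _ = (X + _) * _]rmorphM.
  by rewrite [X in _ = (_ + X) * _]rmorphM; ring.
Qed.

Section ConvexCombination.
Variables k khat : nat.
Hypothesis len : ((m + 2) * k <= khat)%N.

Lemma joint_rank_nr_conv_comb n (w : 'I_n -> R) (x : 'I_n -> 'rV[R]_m) s b :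
  0 <= s -> (forall i, 0 <= w i) -> s + \sum_(i < n) w i = 1 ->
  (forall i, joint_rank_nr ip A khat (x i)) -> joint_rank_nr ip A k b ->
  joint_rank_nr ip A k (s *: b + \sum_(i < n) w i *: x i).
Proof.
elim: n w x s => [|n IH] w x s s_ge0 w_ge0 sum1 Ax Ab.
  by move: sum1; rewrite !big_ord0 !addr0 => ->; rewrite scale1r.
pose w' i := w (widen_ord (leqnSn n) i).
pose x' i := x (widen_ord (leqnSn n) i).
pose S := s + \sum_(i < n) w' i.
have S1 : S + w ord_max = 1 by rewrite -sum1 big_ord_recr /= addrA.
have sw'_ge0 : 0 <= \sum_(i < n) w' i by apply: sumr_ge0 => i _; apply: w_ge0.
have S_ge0 : 0 <= S by apply: addr_ge0.
rewrite big_ord_recr /= -/(x' _) -/(w' _).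
have [S0|S_neq0] := eqVneq S 0.
  have /andP [/eqP s0 /eqP sw'0] : (s == 0) && (\sum_(i < n) w' i == 0).
    by rewrite -paddr_eq0 // -/S S0.
  have w'0 := psumr_eq0P (fun i _ => w_ge0 _) sw'0.
  have -> : w ord_max = 1 by rewrite -S1 S0 add0r.
  rewrite s0 scale0r add0r big1 ?add0r ?scale1r => [|i _]; last first.
    by rewrite /w' w'0 // scale0r.
  apply: joint_rank_nr_le (Ax ord_max).
  by rewrite (leq_trans _ len) // leq_pmull // addn2.
have S_gt0 : 0 < S by rewrite lt_def S_neq0 S_ge0.
have sum1' : s / S + \sum_(i < n) w' i / S = 1.
  by rewrite -mulr_suml -mulrDl divff.
have Ay := IH (fun i => w' i / S) x' (s / S) (divr_ge0 s_ge0 S_ge0)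
  (fun i => divr_ge0 (w_ge0 _) S_ge0) sum1' (fun i => Ax _) Ab.
have S_le1 : 0 <= S <= 1 by rewrite S_ge0 -S1 lerDl w_ge0.
have -> : s *: b + (\sum_(i < n) w' i *: x' i + w ord_max *: x ord_max) =
    (1 - S) *: x ord_max + S *: (s / S *: b + \sum_(i < n) (w' i / S) *: x' i).
  have -> : 1 - S = w ord_max by rewrite -S1 addrC addKr.
  rewrite scalerDr scalerA scaler_sumr mulrC (divfK S_neq0).
  under [in RHS]eq_bigr => i _ do rewrite scalerA mulrC (divfK S_neq0).
  by rewrite addrA addrC.
exact: joint_rank_nr_segment len S_le1 (Ax ord_max) Ay.
Qed.

Lemma conv_hull_star_center c :
  conv_hull (joint_rank_nr ip A khat) c -> star_center (joint_rank_nr ip A k) c.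
Proof.
move=> [n [w [x [w_ge0 w_sum1 Ax ->]]]].
have [b Ab] : exists b, joint_rank_nr ip A k b.
  case: n w x w_ge0 w_sum1 Ax => [|n] w x _ w_sum1 Ax.
    by move: w_sum1; rewrite big_ord0 => /eqP; rewrite eq_sym oner_eq0.
  exists (x ord0); apply: joint_rank_nr_le (Ax ord0).
  by rewrite (leq_trans _ len) // leq_pmull // addn2.
split=> [|b' Ab' t /andP [t_ge0 t_le1]].
  have := joint_rank_nr_conv_comb (lexx 0) w_ge0 _ Ax Ab.
  by rewrite scale0r !add0r; apply.
have wt_ge0 i : 0 <= (1 - t) * w i by rewrite mulr_ge0 // subr_ge0.
have sum1 : t + \sum_(i < n) (1 - t) * w i = 1.
  by rewrite -mulr_sumr w_sum1 mulr1 addrC subrK.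
have := joint_rank_nr_conv_comb t_ge0 wt_ge0 sum1 Ax Ab'.
rewrite scaler_sumr addrC.
by under [in X in _ X -> _]eq_bigr => i _ do rewrite -scalerA.
Qed.

End ConvexCombination.
End JointRankRange.

Unset Implicit Arguments.
Set Strict Implicit.

Theorem theorem3p1 (R : realType) (H : lmodType R[i]) (ip : H -> H -> R[i])
  (hH : is_hilbert ip) (m : nat) (A : 'I_m -> H -> H)
  (hA : forall j, bounded_op ip (A j) /\ self_adjoint ip (A j))
  (k : nat) (hk : (0 < k)%N) (khat : nat) (hkhat : ((m + 2) * k <= khat)%N)
  (hne : exists a, joint_rank_nr ip A khat a) :
  [/\ star_shaped (joint_rank_nr ip A k),
      (forall a, conv_hull (joint_rank_nr ip A khat) a -> joint_rank_nr ip A k a) &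
      (forall c, conv_hull (joint_rank_nr ip A khat) c -> star_center (joint_rank_nr ip A k) c)].
Proof.
have [hip _] := hH.
have A_lin j : linear_op (A j) by case: (hA j) => -[].
have A_sa j : self_adjoint ip (A j) by case: (hA j).
have star := conv_hull_star_center hip A_lin A_sa hkhat.
split=> [|a /star [] //|//].
by have [a Aa] := hne; exists a; apply/star/conv_hull_self.
Qed.
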